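(* Let $\alpha\in\mathbb N$ and $n\ge 0$. The $(i,j)$-th entry ($0\le i,j\le n$) of the inverse of the matrix $(1/F_{\alpha+i+j})_{0\le i,j\le n}$ is $$(-1)^{n(\alpha+i+j)-\binom{i}{2}-\binom{j}{2}}F_{\alpha+i+j}\binom{\alpha+n+i}{n-j}_{\mathbb F}\binom{\alpha+n+j}{n-i}_{\mathbb F}\binom{\alpha+i+j-1}{i}_{\mathbb F}\binom{\alpha+i+j-1}{j}_{\mathbb F}.$$
   Context: $F_n$ are the Fibonacci numbers ($F_0=0,F_1=1,F_{n+1}=F_n+F_{n-1}$). The Fibonomial coefficients are $\binom{n}{k}_{\mathbb F}=\prod_{i=1}^k F_{n-i+1}/F_i$ for $0\le k\le n$ (empty product $=1$). *)

From mathcomp Require Import all_boot all_order all_algebra.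
Set Implicit Arguments. Unset Strict Implicit. Unset Printing Implicit Defensive.
Import Order.TTheory GRing.Theory Num.Theory.

Fixpoint fib (n : nat) : nat :=
  match n with
  | 0 => 0
  | 1 => 1
  | (m.+1 as k).+1 => fib k + fib m
  end.

(* Fibonomial coefficient  binom(n,k)_F = prod_{i=1}^k F_{n-i+1} / F_i,
   computed in rat (used only for 0 <= k <= n). *)
Definition fibonomial (n k : nat) : rat :=
  (\prod_(1 <= i < k.+1) ((fib (n - i + 1))%:R / (fib i)%:R))%R.

(* Write r_m = F_(m+1) / F_m.  D'Ocagne's identity gives
   (r_a - r_b) F_a F_b = (-1)^(b+1) F_(a-b) for b <= a, so for the nodes
   x_i = r_(alpha+n+1+i) and y_j = r_(n+1-j), suitably weighted, the generalized
   Filbert matrix (1 / F_(alpha+i+j)) is a diagonally rescaled Cauchy matrix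
   (1 / (x_i - y_j)).  The inverse of a Cauchy matrix is explicit: it follows from
   the vanishing of the top divided difference of prod_(l <> k) (X - x_l) at the
   nodes x_i, y_0, ..., y_n.  In that inverse every weighted difference of two nodes
   is a signed Fibonacci number, so the products over the nodes collapse to
   Fibonacci factorials and pairs of Fibonomial coefficients, and the sign reduces
   to a parity computation. *)

From mathcomp Require Import all_boot all_order all_algebra.
From mathcomp Require Import zify ring.
Set Implicit Arguments. Unset Strict Implicit. Unset Printing Implicit Defensive.
Import Order.TTheory GRing.Theory Num.Theory.
Local Open Scope ring_scope.

Lemma signr_odd_eq (R : pzRingType) a b : odd a = odd b -> (-1 : R) ^+ a = (-1) ^+ b.
Proof. by move=> odd_ab; rewrite -[LHS]signr_odd odd_ab signr_odd. Qed.

Lemma signrz_subn (R : fieldType) (z : int) (c : nat) :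
  (-1 : R) ^ (z - c%:Z) = (-1) ^ z * (-1) ^+ c.
Proof. by rewrite expfzDr ?oppr_eq0 ?oner_eq0 // -invr_expz invr_sign. Qed.

Lemma big_option (R : Type) (idx : R) (op : Monoid.com_law idx) (T : finType)
    (F : option T -> R) :
  \big[op/idx]_o F o = op (F None) (\big[op/idx]_t F (Some t)).
Proof.
rewrite (bigD1 None) //= (reindex_omap Some id) => [|[] //].
by congr (op _ _); apply: eq_bigl => t; rewrite eqxx.
Qed.

Section BigNeq.
Variables (R : Type) (idx : R) (op : Monoid.com_law idx).

Lemma big_ord_neq n (j : 'I_n.+1) (G : nat -> R) :
  \big[op/idx]_(l < n.+1 | l != j) G l =
  op (\big[op/idx]_(0 <= l < j) G l) (\big[op/idx]_(j.+1 <= l < n.+1) G l).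
Proof.
rewrite -(big_mkord (fun l => l != nat_of_ord j)).
rewrite (big_cat_nat _ (n := j)) //= ?(ltnW (ltn_ord j)) //.
rewrite (big_ltn_cond (m := nat_of_ord j)) ?ltn_ord // eqxx.
congr (op _ _); rewrite big_nat_cond [RHS]big_nat_cond; apply: eq_bigl => l; lia.
Qed.
End BigNeq.

Lemma prod_sub_neq0 (K : idomainType) (I : finType) (h : I -> K) (j : I) :
  injective h -> \prod_(l | l != j) (h j - h l) != 0.
Proof. by move=> h_inj; apply/prodf_neq0 => l lj; rewrite subr_eq0 (inj_eq h_inj) eq_sym. Qed.

Section LagrangeInterpolation.
Variables (K : fieldType) (I : finType) (t : I -> K).
Hypothesis t_inj : injective t.

Lemma size_prod_XsubC_neq (j : I) :
  size (\prod_(l | l != j) ('X - (t l)%:P)) = #|I|.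
Proof.
have I_gt0 : (0 < #|I|)%N by apply/card_gt0P; exists j.
rewrite size_prod => [|l _]; last by rewrite polyXsubC_eq0.
rewrite (eq_bigr (fun=> 2%N)) => [|l _]; last exact: size_XsubC.
rewrite sum_nat_const cardC1; lia.
Qed.

Lemma lagrange_interpolation (p : {poly K}) : (size p <= #|I|)%N ->
  p = \sum_j (p.[t j] / \prod_(l | l != j) (t j - t l))
            *: \prod_(l | l != j) ('X - (t l)%:P).
Proof.
move=> size_p; set q := \sum_j _; apply/esym/eqP; rewrite -subr_eq0; apply/eqP.
have q_t i : q.[t i] = p.[t i].
  rewrite horner_sum (bigD1 i) //= [X in _ + X]big1 ?addr0 => [|j ji];
    rewrite hornerZ horner_prod.
    by rewrite (eq_bigr _ (fun l _ => hornerXsubC _ _)) mulfVK ?prod_sub_neq0.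
  by rewrite [X in _ * X](bigD1 i) 1?eq_sym //= hornerXsubC subrr mul0r mulr0.
apply: (@roots_geq_poly_eq0 _ _ [seq t j | j <- enum I]).
- by apply/allP => _ /mapP[j _ ->]; rewrite /root hornerD hornerN q_t subrr.
- by rewrite map_inj_uniq // enum_uniq.
rewrite size_map -cardE; apply: leq_trans (size_polyD _ _) _.
rewrite size_polyN geq_max size_p andbT /q.
apply: (big_ind (fun r : {poly K} => size r <= #|I|)%N) => [|r s|j _].
- by rewrite size_poly0.
- by move=> r_le s_le; apply: leq_trans (size_polyD _ _) _; rewrite geq_max r_le.
by apply: leq_trans (size_scale_leq _ _) _; rewrite size_prod_XsubC_neq.
Qed.

Lemma sum_lagrange_eq0 (p : {poly K}) : (size p < #|I|)%N ->
  \sum_j p.[t j] / \prod_(l | l != j) (t j - t l) = 0.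
Proof.
move=> size_p; have I_gt0 : (0 < #|I|)%N by apply: leq_ltn_trans size_p.
have /(congr1 (fun r : {poly K} => r`_#|I|.-1)) := lagrange_interpolation (ltnW size_p).
rewrite nth_default => [top_coef|]; last by rewrite -ltnS prednK.
rewrite [RHS]top_coef coef_sum; apply: eq_bigr => j _.
have /monicP := monic_prod_XsubC (index_enum I) (predC1 j) t.
by rewrite coefZ lead_coefE size_prod_XsubC_neq => ->; rewrite mulr1.
Qed.
End LagrangeInterpolation.

Section CauchyMatrix.
Variables (K : fieldType) (n : nat) (x y : 'I_n -> K).
Hypotheses (x_inj : injective x) (y_inj : injective y).
Hypothesis xy_neq : forall i j, x i != y j.

Lemma cauchy_sum i k :
  \sum_j (x i - y j)^-1
         * (\prod_(l | l != k) (y j - x l) / \prod_(l | l != j) (y j - y l))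
  = (i == k)%:R * (\prod_(l | l != k) (x k - x l) / \prod_l (x k - y l)).
Proof.
pose t o := if o is Some l then y l else x i.
have t_inj : injective t.
  case=> [a|] [b|] //= => [/y_inj -> // | yx | xy].
    by have := xy_neq i a; rewrite yx eqxx.
  by have := xy_neq i b; rewrite xy eqxx.
pose p := \prod_(l | l != k) ('X - (x l)%:P).
have p_t z : p.[z] = \prod_(l | l != k) (z - x l).
  by rewrite horner_prod; apply: eq_bigr => l _; rewrite hornerXsubC.
have size_p : (size p < #|{: option 'I_n}|)%N.
  by rewrite size_prod_XsubC_neq card_option.
have := sum_lagrange_eq0 t_inj size_p; rewrite big_option /=.
have -> : \prod_(o | o != None) (t None - t o) = \prod_l (x i - y l).
  by rewrite big_mkcond big_option /= mul1r.
have nodes_y j : \prod_(o | o != Some j) (y j - t o)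
               = (y j - x i) * \prod_(l | l != j) (y j - y l).
  by rewrite big_mkcond big_option /= [in RHS]big_mkcond.
rewrite p_t [X in _ + X](eq_bigr (fun j => \prod_(l | l != k) (y j - x l)
    / ((y j - x i) * \prod_(l | l != j) (y j - y l)))) => [|j _]; last first.
  by rewrite nodes_y p_t.
move/eqP; rewrite addrC addr_eq0 => /eqP sum_y.
have term j : (x i - y j)^-1
    * (\prod_(l | l != k) (y j - x l) / \prod_(l | l != j) (y j - y l))
  = - (\prod_(l | l != k) (y j - x l) / ((y j - x i) * \prod_(l | l != j) (y j - y l))).
  by field; rewrite prod_sub_neq0 // !subr_eq0 xy_neq eq_sym xy_neq.
rewrite (eq_bigr _ (fun j _ => term j)) sumrN sum_y opprK.
have [<-|ik] := eqVneq i k; first by rewrite mul1r.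
by rewrite mul0r (bigD1 i) //= subrr !mul0r.
Qed.

Variables (f g : 'I_n -> K).
Hypotheses (f_neq0 : forall i, f i != 0) (g_neq0 : forall j, g j != 0).

Lemma mulmx_weighted_cauchy :
  \matrix_(i, j) ((x i - y j) * f i * g j)^-1 *m
  \matrix_(j, k) (\prod_(l | l != k) ((y j - x l) * g j * f l)
                    / \prod_(l | l != j) ((y j - y l) * g j * g l)
                  * (\prod_l ((x k - y l) * f k * g l)
                    / \prod_(l | l != k) ((x k - x l) * f k * f l)))
  = 1%:M.
Proof.
have xx_neq0 k : \prod_(l | l != k) (x k - x l) != 0 by apply: prod_sub_neq0.
have yy_neq0 j : \prod_(l | l != j) (y j - y l) != 0 by apply: prod_sub_neq0.
have xy_neq0 k : \prod_l (x k - y l) != 0.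
  by apply/prodf_neq0 => l _; rewrite subr_eq0 xy_neq.
have prod_neq0 (h : 'I_n -> K) (P : pred 'I_n) :
  (forall l, h l != 0) -> \prod_(l | P l) h l != 0.
  by move=> h_neq0; apply/prodf_neq0 => l _.
apply/matrixP => i k; rewrite !mxE.
have n_gt0 : (0 < n)%N by apply: leq_ltn_trans (ltn_ord k).
set Q := \prod_l (x k - y l) / \prod_(l | l != k) (x k - x l).
have weights j : \prod_(l | l != k) ((y j - x l) * g j * f l)
                    / \prod_(l | l != j) ((y j - y l) * g j * g l)
                  * (\prod_l ((x k - y l) * f k * g l)
                    / \prod_(l | l != k) ((x k - x l) * f k * f l))
    = g j * f k * (\prod_(l | l != k) (y j - x l) / \prod_(l | l != j) (y j - y l)) * Q.
  rewrite /Q !big_split /= !prodr_const !cardC1 card_ord (bigD1 j (P := xpredT) (F := g)) //=.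
  rewrite -[in f k ^+ n](prednK n_gt0) exprS.
  field; rewrite xx_neq0 yy_neq0 !expf_neq0 ?f_neq0 ?g_neq0 //.
  by rewrite (prod_neq0 _ _ f_neq0) (prod_neq0 _ _ g_neq0).
under eq_bigr => j _ do rewrite !mxE weights.
have term j : ((x i - y j) * f i * g j)^-1
      * (g j * f k * (\prod_(l | l != k) (y j - x l) / \prod_(l | l != j) (y j - y l)) * Q)
    = f k / f i * Q
      * ((x i - y j)^-1 * (\prod_(l | l != k) (y j - x l) / \prod_(l | l != j) (y j - y l))).
  by field; rewrite yy_neq0 subr_eq0 xy_neq f_neq0 g_neq0.
rewrite (eq_bigr _ (fun j _ => term j)) -mulr_sumr cauchy_sum.
have [->|_] := eqVneq i k; last by rewrite !mul0r mulr0.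
by rewrite /Q /= mul1r; field; rewrite xx_neq0 xy_neq0 f_neq0.
Qed.
End CauchyMatrix.

Lemma fibSS m : fib m.+2 = (fib m.+1 + fib m)%N.
Proof. by []. Qed.

Definition fibfact (R : pzSemiRingType) (m : nat) : R :=
  \prod_(1 <= i < m.+1) (fib i)%:R.

Section FibonacciIdentities.
Variable R : comPzRingType.
Local Notation F m := ((fib m)%:R : R).

Lemma natr_fibSS m : F m.+2 = F m.+1 + F m.
Proof. by rewrite fibSS natrD. Qed.

Lemma fib_dOcagne a b : (b <= a)%N ->
  F a.+1 * F b - F a * F b.+1 = (-1) ^+ b.+1 * F (a - b).
Proof.
elim: b a => [|b IH] a le_ba.
  by rewrite mulr0 mulr1 sub0r subn0 expr1 mulN1r.
case: a le_ba => // a le_ba.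
by rewrite subSS exprS -mulrA -IH // !natr_fibSS; ring.
Qed.

Lemma prod_fib_signed (c n : nat) (j : 'I_n.+1) (d : nat -> R) :
    (forall l, (l < j)%N -> d l = (-1) ^+ (c + l).+1 * F (j - l)) ->
    (forall l, (j < l <= n)%N -> d l = (-1) ^+ (c + j) * F (l - j)) ->
  \prod_(l < n.+1 | l != j) d l
  = (-1) ^+ (j * c.+1 + 'C(j, 2) + (n - j) * (c + j)) * (fibfact R j * fibfact R (n - j)).
Proof.
move=> d_lt d_gt; rewrite big_ord_neq.
rewrite (@eq_big_nat _ _ _ 0 j _ (fun l => (-1) ^+ (c + l).+1 * F (j - l))); last first.
  by move=> l /andP[_]; apply: d_lt.
rewrite (@eq_big_nat _ _ _ j.+1 n.+1 _ (fun l => (-1) ^+ (c + j) * F (l - j))); last first.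
  by move=> l /andP[lt_jl le_ln]; rewrite d_gt ?lt_jl.
have sum_lt : (\sum_(0 <= l < j) (c + l).+1 = j * c.+1 + 'C(j, 2))%N.
  rewrite (eq_bigr (fun l => c.+1 + l)%N) => [|l _]; last by rewrite addSn.
  by rewrite big_split /= sum_nat_const_nat bin2_sum subn0 mulnC.
rewrite !big_split /= !prodrXr sum_lt sum_nat_const_nat subSS mulrACA -exprD.
congr (_ * (_ * _)).
  rewrite big_nat_rev add0n /fibfact -[1%N]add0n big_addn subn1 /=.
  by apply: eq_big_nat => l /andP[_ lt_lj]; congr (fib _)%:R; lia.
have le_jn : (j <= n)%N by rewrite -ltnS.
rewrite /fibfact -[j.+1]add1n big_addn subSn //.
by apply: eq_big_nat => l _; rewrite addnK.
Qed.
End FibonacciIdentities.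

Lemma fib_gt0 m : (0 < m)%N -> (0 < fib m)%N.
Proof.
elim/ltn_ind: m => [[|[|m]]] // IH _.
by rewrite fibSS addn_gt0 IH.
Qed.

Section FibonacciRatio.
Variable R : numFieldType.
Local Notation F m := ((fib m)%:R : R).

Lemma natr_fib_neq0 m : (0 < m)%N -> F m != 0.
Proof. by move=> /fib_gt0; rewrite pnatr_eq0 -lt0n. Qed.

Lemma fibfact_neq0 m : fibfact R m != 0.
Proof.
rewrite prodf_seq_neq0; apply/allP => i; rewrite mem_index_iota => /andP[i_gt0 _].
exact: natr_fib_neq0.
Qed.

Definition fib_ratio (m : nat) : R := F m.+1 / F m.

Lemma fib_ratio_sub_ge a b : (0 < b <= a)%N ->
  (fib_ratio a - fib_ratio b) * F a * F b = (-1) ^+ b.+1 * F (a - b).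
Proof.
case/andP=> b_gt0 le_ba; rewrite -fib_dOcagne // /fib_ratio.
by field; rewrite !natr_fib_neq0 // (leq_trans b_gt0).
Qed.

Lemma fib_ratio_sub_le a b : (0 < a <= b)%N ->
  (fib_ratio a - fib_ratio b) * F a * F b = (-1) ^+ a * F (b - a).
Proof.
move=> ab; have := fib_ratio_sub_ge ab; rewrite exprS => sub_ba.
transitivity (- ((fib_ratio b - fib_ratio a) * F b * F a)); first by ring.
by rewrite sub_ba; ring.
Qed.

Lemma fib_ratio_eq a b : (0 < a)%N -> (0 < b)%N ->
  (fib_ratio a == fib_ratio b) = (a == b).
Proof.
move=> a_gt0 b_gt0.
have ratio_neq a' b' : (0 < b' < a')%N -> fib_ratio a' != fib_ratio b'.
  case/andP=> b'_gt0 lt_ba; have : (fib_ratio a' - fib_ratio b') * F a' * F b' != 0.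
    rewrite fib_ratio_sub_ge ?b'_gt0 ?(ltnW lt_ba) //.
    by rewrite mulf_neq0 ?signr_eq0 // natr_fib_neq0 // subn_gt0.
  by rewrite -!mulrA mulf_eq0 subr_eq0 negb_or => /andP[].
case: (ltngtP a b) => [lt_ab|lt_ba|->]; last by rewrite !eqxx.
  by rewrite eq_sym (negPf (ratio_neq _ _ _)) ?a_gt0 // ltn_eqF.
by rewrite (negPf (ratio_neq _ _ _)) ?b_gt0 // gtn_eqF.
Qed.
End FibonacciRatio.

Lemma fibonomialE N m : (m <= N)%N ->
  fibonomial N m = (\prod_(N.+1 - m <= l < N.+1) (fib l)%:R) / fibfact rat m.
Proof.
move=> le_mN; rewrite /fibonomial big_split /= prodfV; congr (_ / _).
elim: m le_mN => [|m IH] le_mN; first by rewrite !big_geq.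
rewrite big_nat_recr // IH 1?ltnW // [in RHS]big_ltn; last by lia.
have -> : ((N.+1 - m.+1).+1 = N.+1 - m)%N by lia.
by rewrite mulrC; congr (_ * (fib _)%:R); lia.
Qed.

Lemma prod_fib_neq_fibonomial (a n : nat) (k : 'I_n.+1) : (0 < a)%N ->
  \prod_(l < n.+1 | l != k) ((fib (a + l))%:R : rat)
  = fibonomial (a + n) (n - k) * fibonomial (a + k - 1) k
    * (fibfact rat k * fibfact rat (n - k)).
Proof.
move=> a_gt0; have le_kn : (k <= n)%N by rewrite -ltnS.
have shift p q : \prod_(p <= l < q) ((fib (a + l))%:R : rat)
               = \prod_(a + p <= l < a + q) (fib l)%:R.
  by rewrite [(a + p)%N]addnC big_addn addKn; apply: eq_bigr => l _; rewrite addnC.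
rewrite (big_ord_neq _ _ (fun l => (fib (a + l))%:R)) /= !shift.
have le_k : (k <= a + k - 1)%N by lia.
have le_nk : (n - k <= a + n)%N by lia.
rewrite !fibonomialE ?le_k ?le_nk //.
have -> : ((a + k - 1).+1 - k = a + 0)%N by lia.
have -> : ((a + k - 1).+1 = a + k)%N by lia.
have -> : ((a + n).+1 - (n - k) = a + k.+1)%N by lia.
by rewrite -addnS; field; rewrite !fibfact_neq0.
Qed.

Section FilbertInverse.
Variables (alpha n : nat).
Hypothesis alpha_gt0 : (0 < alpha)%N.
Local Notation F m := ((fib m)%:R : rat).

Let u (i : nat) := (alpha + n + i).+1.
Let v (j : nat) := (n.+1 - j)%N.
Let x (i : nat) := fib_ratio rat (u i).
Let y (j : nat) := fib_ratio rat (v j).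
Let f (i : nat) := F (u i).
(* The sign cancels the sign in d'Ocagne's identity. *)
Let g (j : nat) := (-1) ^+ (v j).+1 * F (v j).

Lemma odd_filbert_inv_sign (j k : nat) : (j <= n)%N -> (k <= n)%N ->
  odd (n + (j * n.+1 + 'C(j, 2) + (n - j) * (n + j))
         + (k * (alpha + n).+2 + 'C(k, 2) + (n - k) * ((alpha + n).+1 + k)))
  = odd (n * (alpha + j + k) + 'C(j, 2) + 'C(k, 2)).
Proof.
move=> le_jn le_kn; rewrite !(oddD, oddM, oddS, oddB) //.
by case: (odd alpha) (odd n) (odd j) (odd k) (odd 'C(j, 2)) (odd 'C(k, 2))
  => [] [] [] [] [] [].
Qed.

Lemma weighted_xy (i j : 'I_n.+1) : (x i - y j) * f i * g j = F (alpha + i + j).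
Proof.
have le_jn : (j <= n)%N by rewrite -ltnS.
rewrite /g mulrCA fib_ratio_sub_ge ?signrMK; last by rewrite /u /v; lia.
by congr (fib _)%:R; rewrite /u /v; lia.
Qed.

Lemma prod_weighted_yx (j k : 'I_n.+1) :
  \prod_(l | l != k) ((y j - x l) * g j * f l)
  = (-1) ^+ n * \prod_(l | l != k) F (alpha + j + l).
Proof.
rewrite (eq_bigr (fun l : 'I_n.+1 => -1 * F (alpha + j + l))) => [|l _].
  by rewrite big_split /= prodr_const cardC1 card_ord.
transitivity (- ((x l - y j) * f l * g j)); first by ring.
by rewrite weighted_xy mulN1r addnAC.
Qed.

Lemma prod_weighted_xy (k : 'I_n.+1) :
  \prod_(l < n.+1) ((x k - y l) * f k * g l) = \prod_(l < n.+1) F (alpha + k + l).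
Proof. by apply: eq_bigr => l _; rewrite weighted_xy. Qed.

Lemma prod_weighted_yy (j : 'I_n.+1) :
  \prod_(l | l != j) ((y j - y l) * g j * g l)
  = (-1) ^+ (j * n.+1 + 'C(j, 2) + (n - j) * (n + j))
    * (fibfact rat j * fibfact rat (n - j)).
Proof.
have le_jn : (j <= n)%N by rewrite -ltnS.
have yy_signed l : (y j - y l) * g j * g l = (-1) ^+ ((v j).+1 + (v l).+1)
    * ((fib_ratio rat (v j) - fib_ratio rat (v l)) * F (v j) * F (v l)).
  by rewrite /y /g exprD; ring.
apply: (prod_fib_signed (d := fun l : nat => (y j - y l) * g j * g l)) => l l_range;
  rewrite yy_signed.
  rewrite fib_ratio_sub_le; last by rewrite /v; lia.
  rewrite mulrA -exprD; congr (_ * (fib _)%:R); last by rewrite /v; lia.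
  by apply: signr_odd_eq; rewrite /v; lia.
rewrite fib_ratio_sub_ge; last by rewrite /v; lia.
rewrite mulrA -exprD; congr (_ * (fib _)%:R); last by rewrite /v; lia.
by apply: signr_odd_eq; rewrite /v; lia.
Qed.

Lemma prod_weighted_xx (k : 'I_n.+1) :
  \prod_(l | l != k) ((x k - x l) * f k * f l)
  = (-1) ^+ (k * (alpha + n).+2 + 'C(k, 2) + (n - k) * ((alpha + n).+1 + k))
    * (fibfact rat k * fibfact rat (n - k)).
Proof.
apply: (prod_fib_signed (d := fun l : nat => (x k - x l) * f k * f l)) => l l_range.
  rewrite fib_ratio_sub_ge; last by rewrite /u; lia.
  by congr ((-1) ^+ _ * (fib _)%:R); rewrite /u; lia.
rewrite fib_ratio_sub_le; last by rewrite /u; lia.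
by congr ((-1) ^+ _ * (fib _)%:R); rewrite /u; lia.
Qed.

Lemma filbert_inv_entry (j k : 'I_n.+1) :
  \prod_(l | l != k) ((y j - x l) * g j * f l)
    / \prod_(l | l != j) ((y j - y l) * g j * g l)
  * (\prod_(l < n.+1) ((x k - y l) * f k * g l)
    / \prod_(l | l != k) ((x k - x l) * f k * f l))
  = (-1 : rat) ^ ((n * (alpha + j + k))%:Z - ('C(j, 2))%:Z - ('C(k, 2))%:Z)
    * F (alpha + j + k)
    * fibonomial (alpha + n + j) (n - k)
    * fibonomial (alpha + n + k) (n - j)
    * fibonomial (alpha + j + k - 1) j
    * fibonomial (alpha + j + k - 1) k.
Proof.
have le_jn : (j <= n)%N by rewrite -ltnS.
have le_kn : (k <= n)%N by rewrite -ltnS.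
rewrite prod_weighted_yx prod_weighted_yy prod_weighted_xy prod_weighted_xx.
rewrite (bigD1 j (P := xpredT)) //= addnAC.
rewrite !prod_fib_neq_fibonomial ?addn_gt0 ?alpha_gt0 //.
rewrite !signrz_subn -!exprD -(signr_odd_eq _ (odd_filbert_inv_sign le_jn le_kn)).
rewrite !(addnAC alpha _ n) (addnAC alpha k j) !invfM !invr_sign !exprD.
by field; rewrite !fibfact_neq0.
Qed.

Lemma mulmx_filbert_inv :
  \matrix_(i < n.+1, j < n.+1) ((fib (alpha + i + j))%:R : rat)^-1 *m
  \matrix_(i < n.+1, j < n.+1)
    ((-1 : rat) ^ ((n * (alpha + i + j))%:Z - ('C(i, 2))%:Z - ('C(j, 2))%:Z)
     * (fib (alpha + i + j))%:R
     * fibonomial (alpha + n + i) (n - j)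
     * fibonomial (alpha + n + j) (n - i)
     * fibonomial (alpha + i + j - 1) i
     * fibonomial (alpha + i + j - 1) j)
  = 1%:M.
Proof.
have x_inj : injective (fun i : 'I_n.+1 => x i).
  by move=> a b /eqP; rewrite /x fib_ratio_eq // /u => /eqP eq_ab; apply: ord_inj; lia.
have y_inj : injective (fun j : 'I_n.+1 => y j).
  move=> a b /eqP; have lt_a := ltn_ord a; have lt_b := ltn_ord b.
  by rewrite /y fib_ratio_eq /v; [move=> /eqP ?; apply: ord_inj|..]; lia.
have xy_neq (i j : 'I_n.+1) : x i != y j.
  by have lt_j := ltn_ord j; rewrite /x /y fib_ratio_eq /u /v; [apply/eqP|..]; lia.
have f_neq0 (i : 'I_n.+1) : f i != 0 by rewrite natr_fib_neq0.
have g_neq0 (j : 'I_n.+1) : g j != 0.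
  by have lt_j := ltn_ord j; rewrite mulf_neq0 ?signr_eq0 // natr_fib_neq0 // /v; lia.
rewrite -(mulmx_weighted_cauchy x_inj y_inj xy_neq f_neq0 g_neq0).
by congr (_ *m _); apply/matrixP => i j; rewrite !mxE /= ?weighted_xy ?filbert_inv_entry.
Qed.

End FilbertInverse.

Theorem theorem3p4 (alpha n : nat) (halpha : (0 < alpha)%N) :
  let A : 'M[rat]_(n.+1) :=
    \matrix_(i, j) ((fib (alpha + i + j))%:R)^-1 in
  A \in unitmx /\
  invmx A =
    \matrix_(i, j)
      ((-1 : rat) ^ ((n * (alpha + i + j))%:Z - ('C(i, 2))%:Z - ('C(j, 2))%:Z)
       * (fib (alpha + i + j))%:R
       * fibonomial (alpha + n + i) (n - j)
       * fibonomial (alpha + n + j) (n - i)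
       * fibonomial (alpha + i + j - 1) i
       * fibonomial (alpha + i + j - 1) j).
Proof.
move=> A; have AB := mulmx_filbert_inv n halpha.
have [A_unit _] := mulmx1_unit AB.
split=> //; by rewrite -[RHS]mul1mx -(mulVmx A_unit) -mulmxA AB mulmx1.
Qed.
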